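(* Let $T>0$. Let $B_1,B_2,d_1,d_2$ be nonnegative functions of $(t,x)\in\mathbb{R}\times[0,\infty)$, $T$-periodic in $t$. Suppose that for $k=1,2$ there exist a real $\mu_k$ and a positive function $\phi^k$, $T$-periodic in $t$, such that $$-\partial_t\phi^k(t,x)-\partial_x\phi^k(t,x)+[d_k(t,x)+\mu_k]\phi^k(t,x)\geq B_k(t,x)\,\phi^k(t,0).$$ For $\theta\in[0,1]$ let $\phi^\theta=(\phi^1)^\theta(\phi^2)^{1-\theta}$, $B^\theta=B_1^\theta B_2^{1-\theta}$ and $d^\theta=\theta d_1+(1-\theta)d_2$. Then $\phi^\theta$ is positive, $T$-periodic in $t$, and $$-\partial_t\phi^\theta(t,x)-\partial_x\phi^\theta(t,x)+[\theta\mu_1+(1-\theta)\mu_2+d^\theta(t,x)]\phi^\theta(t,x)\geq B^\theta(t,x)\,\phi^\theta(t,0).$$ *)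

From Stdlib Require Import Reals Lra.
From Coquelicot Require Import Coquelicot.
Open Scope R_scope.

(* Real power a^θ for a >= 0, with the conventions 0^0 = 1 and 0^θ = 0 for θ <> 0;
   for a > 0 it is Rpower a θ = exp (θ ln a). *)
Definition rpow (a th : R) : R :=
  if Req_EM_T a 0 then (if Req_EM_T th 0 then 1 else 0) else Rpower a th.

Definition has_pdt (f : R -> R -> R) (t x l : R) : Prop :=
  is_derive (fun s => f s x) t l.

(* Partial derivative in x of f at (t,x) equals l, taken within the domain
   x in [0, +oo) (so one-sided at x = 0). *)
Definition has_pdx (f : R -> R -> R) (t x l : R) : Prop :=
  filterlim (fun y => (f t y - f t x) / (y - x))
    (within (fun y => 0 <= y /\ y <> x) (locally x)) (locally l).

Definition supersol (B d : R -> R -> R) (mu : R) (phi : R -> R -> R) : Prop :=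
  forall t x, 0 <= x ->
    exists dt dx, has_pdt phi t x dt /\ has_pdx phi t x dx /\
      - dt - dx + (d t x + mu) * phi t x >= B t x * phi t 0.

Definition periodic_t (T : R) (f : R -> R -> R) : Prop :=
  forall t x, 0 <= x -> f (t + T) x = f t x.

(* With phi^θ = exp (θ ln phi^1 + (1-θ) ln phi^2), the operator -∂t - ∂x acts on
   ln phi^θ as the convex combination of its action on ln phi^1 and ln phi^2.
   Dividing the two supersolution inequalities by phi^k(t,x) and combining them
   with weights θ, 1-θ leaves on the right θ u + (1-θ) v with
   u = B1 phi^1(t,0)/phi^1(t,x), v = B2 phi^2(t,0)/phi^2(t,x), and the weighted
   AM-GM inequality u^θ v^(1-θ) <= θ u + (1-θ) v gives B^θ phi^θ(t,0)/phi^θ(t,x). *)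
From Stdlib Require Import Reals Lra.
From Coquelicot Require Import Coquelicot.
Open Scope R_scope.

Lemma filterlim_Rmult {T} {F : (T -> Prop) -> Prop} {FF : Filter F} (f g : T -> R) a b :
  filterlim f F (locally a) -> filterlim g F (locally b) ->
  filterlim (fun y => f y * g y) F (locally (a * b)).
Proof.
  intros Hf Hg. eapply filterlim_comp_2; [exact Hf | exact Hg | apply (filterlim_mult a b)].
Qed.

Lemma filterlim_Rplus {T} {F : (T -> Prop) -> Prop} {FF : Filter F} (f g : T -> R) a b :
  filterlim f F (locally a) -> filterlim g F (locally b) ->
  filterlim (fun y => f y + g y) F (locally (a + b)).
Proof.
  intros Hf Hg. eapply filterlim_comp_2; [exact Hf | exact Hg | apply (filterlim_plus a b)].
Qed.

Section DeriveOn.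

Variable D : R -> Prop.

Definition punctured (x : R) : R -> Prop := fun y => D y /\ y <> x.

Definition is_derive_on (g : R -> R) (x l : R) : Prop :=
  filterlim (fun y => (g y - g x) / (y - x)) (within (punctured x) (locally x)) (locally l).

Lemma is_derive_on_continuous g x l :
  is_derive_on g x l -> filterlim g (within (punctured x) (locally x)) (locally (g x)).
Proof.
  intros Hg.
  assert (Hdx : filterlim (fun y => y - x) (within (punctured x) (locally x)) (locally 0)).
  { replace 0 with (x - x) by ring.
    apply filterlim_Rplus; [|apply filterlim_const].
    eapply filterlim_filter_le_1; [apply filter_le_within | apply filterlim_id]. }
  pose proof (filterlim_Rplus _ _ _ _ (filterlim_const (g x))
                (filterlim_Rmult _ _ _ _ Hg Hdx)) as Hlim.
  rewrite Rmult_0_r, Rplus_0_r in Hlim.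
  eapply filterlim_ext_loc; [|exact Hlim].
  unfold within; apply filter_forall. intros y [_ Hyx]. field. lra.
Qed.

(* Carathéodory's formulation: the slope of G at g x, extended by dG there, is
   continuous at g x; this avoids dividing by g y - g x, which may vanish. *)
Lemma is_derive_on_comp G g x l dG :
  is_derive_on g x l -> is_derive G (g x) dG ->
  is_derive_on (fun y => G (g y)) x (dG * l).
Proof.
  intros Hg HG. apply is_derive_Reals in HG.
  set (c := g x).
  set (Q := fun z => if Req_EM_T z c then dG else (G z - G c) / (z - c)).
  assert (HQ : filterlim Q (locally c) (locally dG)).
  { apply filterlim_locally. intros eps.
    destruct (HG eps (cond_pos eps)) as [del Hdel].
    exists del. intros z Hz. unfold Q. destruct (Req_EM_T z c) as [_ | Hzc].
    - apply ball_center.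
    - change (Rabs ((G z - G c) / (z - c) - dG) < eps).
      replace z with (c + (z - c)) at 1 by ring.
      apply Hdel; [lra | exact Hz]. }
  pose proof (filterlim_Rmult _ _ _ _
                (filterlim_comp _ _ _ _ Q _ _ _ (is_derive_on_continuous _ _ _ Hg) HQ) Hg)
    as Hlim.
  eapply filterlim_ext_loc; [|exact Hlim].
  unfold within; apply filter_forall. intros y [_ Hyx]. unfold Q. fold c.
  destruct (Req_EM_T (g y) c) as [-> | Hgy].
  - unfold Rdiv. ring.
  - field. lra.
Qed.

Lemma is_derive_on_lin a b f g x lf lg :
  is_derive_on f x lf -> is_derive_on g x lg ->
  is_derive_on (fun y => a * f y + b * g y) x (a * lf + b * lg).
Proof.
  intros Hf Hg.
  pose proof (filterlim_Rplus _ _ _ _ (filterlim_Rmult _ _ _ _ (filterlim_const a) Hf)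
                (filterlim_Rmult _ _ _ _ (filterlim_const b) Hg)) as Hlim.
  eapply filterlim_ext_loc; [|exact Hlim].
  unfold within; apply filter_forall. intros y [_ Hyx]. field. lra.
Qed.

Lemma is_derive_on_ext f g x l :
  D x -> (forall y, D y -> f y = g y) -> is_derive_on f x l -> is_derive_on g x l.
Proof.
  intros Dx Efg Hf. eapply filterlim_ext_loc; [|exact Hf].
  unfold within; apply filter_forall. intros y [Dy _]. rewrite !Efg; auto.
Qed.

End DeriveOn.

Lemma rpow_gt0_l a th : 0 < a -> rpow a th = exp (th * ln a).
Proof. intros Ha. unfold rpow. destruct (Req_EM_T a 0); [lra | reflexivity]. Qed.

Lemma rpow_0_r a : rpow a 0 = 1.
Proof.
  unfold rpow. destruct (Req_EM_T a 0).
  - destruct (Req_EM_T 0 0); [reflexivity | lra].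
  - unfold Rpower. rewrite Rmult_0_l. apply exp_0.
Qed.

Lemma rpow_1_r a : 0 <= a -> rpow a 1 = a.
Proof.
  intros Ha. unfold rpow. destruct (Req_EM_T a 0) as [-> | Ha0].
  - destruct (Req_EM_T 1 0); [lra | reflexivity].
  - apply Rpower_1. lra.
Qed.

Lemma rpow_0_l th : th <> 0 -> rpow 0 th = 0.
Proof.
  intros Hth. unfold rpow. destruct (Req_EM_T 0 0); [|lra].
  destruct (Req_EM_T th 0); [lra | reflexivity].
Qed.

Lemma rpow_mul a c th : 0 <= a -> 0 < c -> rpow (a * c) th = rpow a th * rpow c th.
Proof.
  intros Ha Hc. destruct (Req_EM_T a 0) as [-> | Ha0].
  - rewrite Rmult_0_l. destruct (Req_EM_T th 0) as [-> | Hth].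
    + rewrite !rpow_0_r. ring.
    + rewrite rpow_0_l by exact Hth. ring.
  - rewrite !rpow_gt0_l, ln_mult, <- exp_plus by nra. f_equal. ring.
Qed.

Lemma exp_convex th p q : 0 <= th <= 1 ->
  exp (th * p + (1 - th) * q) <= th * exp p + (1 - th) * exp q.
Proof.
  intros Hth. set (m := th * p + (1 - th) * q).
  (* the tangent line of exp at m, evaluated at p and at q *)
  assert (Ep : exp p = exp m * exp (p - m)) by (rewrite <- exp_plus; f_equal; ring).
  assert (Eq : exp q = exp m * exp (q - m)) by (rewrite <- exp_plus; f_equal; ring).
  pose proof (exp_ineq1_le (p - m)). pose proof (exp_ineq1_le (q - m)).
  pose proof (exp_pos m).
  assert (0 <= th * (exp m * (exp (p - m) - (1 + (p - m))))).
  { apply Rmult_le_pos; [lra | apply Rmult_le_pos; lra]. }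
  assert (0 <= (1 - th) * (exp m * (exp (q - m) - (1 + (q - m))))).
  { apply Rmult_le_pos; [lra | apply Rmult_le_pos; lra]. }
  assert (th * (exp m * (1 + (p - m))) + (1 - th) * (exp m * (1 + (q - m))) = exp m)
    by (unfold m; ring).
  rewrite Ep, Eq. nra.
Qed.

Definition geom_mean (th u v : R) : R := rpow u th * rpow v (1 - th).

Lemma geom_mean_exp_ln th u v : 0 < u -> 0 < v ->
  geom_mean th u v = exp (th * ln u + (1 - th) * ln v).
Proof. intros Hu Hv. unfold geom_mean. rewrite !rpow_gt0_l by assumption. symmetry; apply exp_plus. Qed.

Lemma geom_mean_gt0 th u v : 0 < u -> 0 < v -> 0 < geom_mean th u v.
Proof. intros Hu Hv. rewrite geom_mean_exp_ln by assumption. apply exp_pos. Qed.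

Lemma geom_mean_mul th u v u' v' : 0 <= u -> 0 <= v -> 0 < u' -> 0 < v' ->
  geom_mean th (u * u') (v * v') = geom_mean th u v * geom_mean th u' v'.
Proof. intros. unfold geom_mean. rewrite !rpow_mul by assumption. ring. Qed.

Lemma geom_mean_le_arith th u v : 0 <= u -> 0 <= v -> 0 <= th <= 1 ->
  geom_mean th u v <= th * u + (1 - th) * v.
Proof.
  intros Hu Hv Hth. unfold geom_mean.
  destruct (Req_EM_T th 0) as [-> | Hth0].
  { rewrite Rminus_0_r, rpow_0_r, rpow_1_r by exact Hv. lra. }
  destruct (Req_EM_T th 1) as [-> | Hth1].
  { rewrite Rminus_diag_eq, rpow_0_r, rpow_1_r by (exact Hu || reflexivity). lra. }
  destruct (Req_EM_T u 0) as [-> | Hu0].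
  { rewrite rpow_0_l by exact Hth0. nra. }
  destruct (Req_EM_T v 0) as [-> | Hv0].
  { rewrite (rpow_0_l (1 - th)) by lra. nra. }
  rewrite !rpow_gt0_l, <- exp_plus by lra.
  rewrite <- (exp_ln u) at 2 by lra. rewrite <- (exp_ln v) at 2 by lra.
  apply exp_convex. exact Hth.
Qed.

Section GeomMeanDerive.

Variables (th : R) (f g : R -> R).

Let log_mean (y : R) : R := th * ln (f y) + (1 - th) * ln (g y).

Lemma is_derive_geom_mean s lf lg :
  (forall y, 0 < f y) -> (forall y, 0 < g y) ->
  is_derive f s lf -> is_derive g s lg ->
  is_derive (fun s => geom_mean th (f s) (g s)) s
    (geom_mean th (f s) (g s) * (th * (lf / f s) + (1 - th) * (lg / g s))).
Proof.
  intros Hf Hg Df Dg.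
  apply is_derive_ext with (f := fun s => exp (log_mean s)).
  { intros y. symmetry. apply geom_mean_exp_ln; auto. }
  rewrite geom_mean_exp_ln by auto. fold (log_mean s).
  pose proof (is_derive_comp ln f s _ _ (is_derive_ln _ (Hf s)) Df) as Dlnf.
  pose proof (is_derive_comp ln g s _ _ (is_derive_ln _ (Hg s)) Dg) as Dlng.
  pose proof (is_derive_comp exp log_mean s _ _ (is_derive_exp (log_mean s))
                (is_derive_plus _ _ _ _ _ (is_derive_scal _ _ th _ Dlnf)
                   (is_derive_scal _ _ (1 - th) _ Dlng))) as Dexp.
  unfold scal, plus in Dexp; simpl in Dexp; unfold mult in Dexp; simpl in Dexp.
  replace (exp (log_mean s) * (th * (lf / f s) + (1 - th) * (lg / g s)))
    with ((th * (lf * / f s) + (1 - th) * (lg * / g s)) * exp (log_mean s)) by (unfold Rdiv; ring).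
  exact Dexp.
Qed.

Lemma is_derive_on_geom_mean D x lf lg :
  D x -> (forall y, D y -> 0 < f y) -> (forall y, D y -> 0 < g y) ->
  is_derive_on D f x lf -> is_derive_on D g x lg ->
  is_derive_on D (fun y => geom_mean th (f y) (g y)) x
    (geom_mean th (f x) (g x) * (th * (lf / f x) + (1 - th) * (lg / g x))).
Proof.
  intros Dx Hf Hg Df Dg.
  apply is_derive_on_ext with (f := fun y => exp (log_mean y)); [exact Dx | |].
  { intros y Dy. symmetry. apply geom_mean_exp_ln; auto. }
  rewrite geom_mean_exp_ln by auto.
  replace (th * (lf / f x) + (1 - th) * (lg / g x))
    with (th * (/ f x * lf) + (1 - th) * (/ g x * lg)) by (unfold Rdiv; ring).
  apply is_derive_on_comp; [|apply is_derive_exp].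
  apply is_derive_on_lin; apply is_derive_on_comp; auto; apply is_derive_ln; auto.
Qed.

End GeomMeanDerive.

(* Pointwise form: L_k stands for (-∂t - ∂x) phi^k at (t,x), a, b for the values of
   phi^1, phi^2 at (t,x) and a0, b0 for their values at (t,0). *)
Lemma geom_mean_supersol_ineq th a b a0 b0 B1 B2 c1 c2 L1 L2 :
  0 <= th <= 1 -> 0 < a -> 0 < b -> 0 < a0 -> 0 < b0 -> 0 <= B1 -> 0 <= B2 ->
  L1 + c1 * a >= B1 * a0 -> L2 + c2 * b >= B2 * b0 ->
  geom_mean th a b * (th * (L1 / a) + (1 - th) * (L2 / b))
    + (th * c1 + (1 - th) * c2) * geom_mean th a b
  >= geom_mean th B1 B2 * geom_mean th a0 b0.
Proof.
  intros Hth Ha Hb Ha0 Hb0 HB1 HB2 I1 I2.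
  set (u := B1 * (a0 / a)). set (v := B2 * (b0 / b)).
  assert (Hu : 0 <= u) by (apply Rmult_le_pos; [lra | apply Rlt_le, Rdiv_lt_0_compat; lra]).
  assert (Hv : 0 <= v) by (apply Rmult_le_pos; [lra | apply Rlt_le, Rdiv_lt_0_compat; lra]).
  assert (Iu : L1 / a + c1 >= u).
  { apply Rminus_ge.
    replace (L1 / a + c1 - u) with ((L1 + c1 * a - B1 * a0) / a) by (unfold u; field; lra).
    apply Rle_ge, Rdiv_le_0_compat; lra. }
  assert (Iv : L2 / b + c2 >= v).
  { apply Rminus_ge.
    replace (L2 / b + c2 - v) with ((L2 + c2 * b - B2 * b0) / b) by (unfold v; field; lra).
    apply Rle_ge, Rdiv_le_0_compat; lra. }
  assert (Euv : geom_mean th B1 B2 * geom_mean th a0 b0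
                = geom_mean th u v * geom_mean th a b).
  { rewrite <- !geom_mean_mul by (try apply Rdiv_lt_0_compat; lra).
    unfold u, v. f_equal; field; lra. }
  pose proof (geom_mean_le_arith th u v Hu Hv Hth).
  pose proof (geom_mean_gt0 th a b Ha Hb).
  rewrite Euv, (Rmult_comm (geom_mean th u v)).
  replace (geom_mean th a b * (th * (L1 / a) + (1 - th) * (L2 / b))
           + (th * c1 + (1 - th) * c2) * geom_mean th a b)
    with (geom_mean th a b * (th * (L1 / a + c1) + (1 - th) * (L2 / b + c2))) by ring.
  apply Rle_ge, Rmult_le_compat_l; [lra|]. nra.
Qed.

Theorem lemma1p1 (T : R) (B1 B2 d1 d2 phi1 phi2 : R -> R -> R) (mu1 mu2 : R) :
  0 < T ->
  (forall t x, 0 <= x -> 0 <= B1 t x /\ 0 <= B2 t x /\ 0 <= d1 t x /\ 0 <= d2 t x) ->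
  periodic_t T B1 -> periodic_t T B2 -> periodic_t T d1 -> periodic_t T d2 ->
  (forall t x, 0 <= x -> 0 < phi1 t x /\ 0 < phi2 t x) ->
  periodic_t T phi1 -> periodic_t T phi2 ->
  supersol B1 d1 mu1 phi1 -> supersol B2 d2 mu2 phi2 ->
  forall th : R, 0 <= th <= 1 ->
    let phith := fun t x => rpow (phi1 t x) th * rpow (phi2 t x) (1 - th) in
    let Bth := fun t x => rpow (B1 t x) th * rpow (B2 t x) (1 - th) in
    let dth := fun t x => th * d1 t x + (1 - th) * d2 t x in
    (forall t x, 0 <= x -> 0 < phith t x) /\
    periodic_t T phith /\
    supersol Bth dth (th * mu1 + (1 - th) * mu2) phith.
Proof.
  intros _ Hnn _ _ _ _ Hpos Per1 Per2 S1 S2 th Hth phith Bth dth.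
  split; [|split].
  - intros t x Hx. destruct (Hpos t x Hx). apply geom_mean_gt0; assumption.
  - intros t x Hx. unfold phith. rewrite Per1, Per2 by exact Hx. reflexivity.
  - intros t x Hx.
    destruct (S1 t x Hx) as (dt1 & dx1 & Dt1 & Dx1 & I1).
    destruct (S2 t x Hx) as (dt2 & dx2 & Dt2 & Dx2 & I2).
    destruct (Hpos t x Hx) as [Ha Hb]. destruct (Hpos t 0 (Rle_refl 0)) as [Ha0 Hb0].
    destruct (Hnn t x Hx) as (HB1 & HB2 & _).
    set (G := geom_mean th (phi1 t x) (phi2 t x)).
    exists (G * (th * (dt1 / phi1 t x) + (1 - th) * (dt2 / phi2 t x))),
           (G * (th * (dx1 / phi1 t x) + (1 - th) * (dx2 / phi2 t x))).
    split; [|split].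
    + apply (is_derive_geom_mean th (fun s => phi1 s x) (fun s => phi2 s x));
        auto; intros s; apply (Hpos s x Hx).
    + apply (is_derive_on_geom_mean th (phi1 t) (phi2 t) (Rle 0));
        auto; intros y Hy; apply (Hpos t y Hy).
    + pose proof (geom_mean_supersol_ineq th _ _ _ _ _ _ _ _ (- dt1 - dx1) (- dt2 - dx2)
                    Hth Ha Hb Ha0 Hb0 HB1 HB2 I1 I2) as Hineq.
      eapply Rge_trans; [|exact Hineq].
      apply Req_ge. unfold dth, phith, G, geom_mean. field. lra.
Qed.
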